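(* Let $\mathcal{X}\subseteq\mathbb{R}^d$ be closed and convex, let $f:\mathcal{X}\to\mathbb{R}$ be convex and continuously differentiable with a minimizer $x^\ast\in\mathcal{X}$, and let $h:\mathcal{X}\to\mathbb{R}$ be strictly convex and continuously differentiable. Let $\alpha,\beta:\mathbb{R}\to\mathbb{R}$ be smooth, with $\beta$ nondecreasing and $\dot\beta_t\le e^{\alpha_t}$ for all $t$. Let $t\mapsto X_t\in\mathcal{X}$ be a differentiable curve such that $Z_t:=X_t+e^{-\alpha_t}\dot X_t\in\mathcal{X}$, $t\mapsto Z_t$ and $t\mapsto\nabla h(Z_t)$ are differentiable, and $$\frac{d}{dt}\nabla h(Z_t)=-e^{\alpha_t+\beta_t}\nabla f(X_t).$$ Then, for $x=x^\ast$, $$\frac{d}{dt}D_h(x,Z_t)\le-\frac{d}{dt}\Big\{e^{\beta_t}\big(f(X_t)-f(x)\big)\Big\};$$ if moreover $\dot\beta_t=e^{\alpha_t}$ for all $t$, this inequality holds for every $x\in\mathcal{X}$. Consequently $\mathcal{E}_t=D_h(x,Z_t)+e^{\beta_t}(f(X_t)-f(x))$ is nonincreasing in $t$ for $x=x^\ast$ (and for every $x\in\mathcal{X}$ when $\dot\beta_t=e^{\alpha_t}$).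
   Context: $D_h(y,x)=h(y)-h(x)-\langle\nabla h(x),y-x\rangle$ is the Bregman divergence of $h$; $\|\cdot\|$ is the Euclidean norm. *)

From HB Require Import structures.
From mathcomp Require Import all_boot all_order all_algebra.
From mathcomp Require Import all_classical all_reals all_analysis.
Set Implicit Arguments. Unset Strict Implicit. Unset Printing Implicit Defensive.
Import Order.TTheory GRing.Theory Num.Theory.
Import numFieldNormedType.Exports.
Local Open Scope classical_set_scope.
Local Open Scope ring_scope.

Section Defs.
Variables (R : realType) (d : nat).
Local Notation V := 'rV[R]_d.

Definition dotv (u v : V) : R := \sum_(i < d) u ord0 i * v ord0 i.

Definition gradient (f : V -> R) (x : V) : V :=
  \row_(i < d) ('d f x : V -> R) (delta_mx ord0 i).

Definition convex_on (X : set V) : Prop :=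
  forall x y (l : R), X x -> X y -> 0 <= l -> l <= 1 ->
    X (l *: x + (1 - l) *: y).

Definition convex_fun_on (X : set V) (f : V -> R) : Prop :=
  forall x y (l : R), X x -> X y -> 0 <= l -> l <= 1 ->
    f (l *: x + (1 - l) *: y) <= l * f x + (1 - l) * f y.

Definition strictly_convex_fun_on (X : set V) (f : V -> R) : Prop :=
  forall x y (l : R), X x -> X y -> x != y -> 0 < l -> l < 1 ->
    f (l *: x + (1 - l) *: y) < l * f x + (1 - l) * f y.

Definition C1_on (X : set V) (f : V -> R) : Prop :=
  (forall x, X x -> differentiable f x) /\ {within X, continuous (gradient f)}.

Definition bregman (h : V -> R) (y x : V) : R :=
  h y - h x - dotv (gradient h x) (y - x).

End Defs.

Definition smooth_fun (R : realType) (a : R -> R) : Prop :=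
  forall (n : nat) (t : R), derivable (derive1n n a) t 1.

(* Along the trajectory, d/dt D_h(x, Z_t) = -<d/dt grad h(Z_t), x - Z_t>
   = e^(alpha+beta) <grad f(X_t), x - Z_t>.  Expanding Z_t = X_t + e^(-alpha) X'_t,
   the X'_t term cancels the one in d/dt e^beta (f(X_t) - f(x)), and the sum of the
   two derivatives is e^beta (e^alpha <grad f(X_t), x - X_t> + beta' (f(X_t) - f(x))).
   By the first-order convexity inequality this is at most
   e^beta (beta' - e^alpha) (f(X_t) - f(x)), which is nonpositive either when
   f(x) <= f(X_t) (x a minimizer) and beta' <= e^alpha, or when beta' = e^alpha. *)
From HB Require Import structures.
From mathcomp Require Import all_boot all_order all_algebra.
From mathcomp Require Import all_classical all_reals all_analysis.
From mathcomp Require Import ring lra.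
Import Order.TTheory GRing.Theory Num.Theory.
Import numFieldNormedType.Exports.
Local Open Scope classical_set_scope.
Local Open Scope ring_scope.

Section Dotv.
Context {R : realType} {d : nat}.
Implicit Types (u v w : 'rV[R]_d) (a : R).

Lemma dotvNl u v : dotv (- u) v = - dotv u v.
Proof. by rewrite /dotv -sumrN; apply: eq_bigr => i _; rewrite mxE mulNr. Qed.

Lemma dotvNr u v : dotv u (- v) = - dotv u v.
Proof. by rewrite /dotv -sumrN; apply: eq_bigr => i _; rewrite mxE mulrN. Qed.

Lemma dotvZl a u v : dotv (a *: u) v = a * dotv u v.
Proof. by rewrite /dotv mulr_sumr; apply: eq_bigr => i _; rewrite mxE mulrA. Qed.

Lemma dotvZr a u v : dotv u (a *: v) = a * dotv u v.
Proof. by rewrite /dotv mulr_sumr; apply: eq_bigr => i _; rewrite mxE mulrCA. Qed.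

Lemma dotvDr u v w : dotv u (v + w) = dotv u v + dotv u w.
Proof. by rewrite /dotv -big_split; apply: eq_bigr => i _; rewrite mxE mulrDr. Qed.

Lemma dotvBr u v w : dotv u (v - w) = dotv u v - dotv u w.
Proof. by rewrite dotvDr dotvNr. Qed.

End Dotv.

Section Calculus.
Context {R : realType} {d : nat}.
Local Notation V := 'rV[R]_d.

Lemma diff_gradient (h : V -> R) y v : 'd h y v = dotv (gradient h y) v.
Proof.
rewrite {1}(row_sum_delta v) linear_sum /dotv; apply: eq_bigr => i _.
by rewrite linearZ /= mxE mulrC.
Qed.

Lemma is_derive_comp_gradient {h : V -> R} {Z : R -> V} {t : R} {dZ : V} :
  differentiable h (Z t) -> is_derive t 1 Z dZ ->
  is_derive t 1 (h \o Z) (dotv (gradient h (Z t)) dZ).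
Proof.
move=> dh dZt; have /derivable1_diffP dZ' : derivable Z t 1 by case: dZt.
have dhZ : differentiable (h \o Z) t := differentiable_comp dZ' dh.
apply: DeriveDef; first exact: diff_derivable.
by rewrite (deriveE _ dhZ) (diff_comp dZ' dh) /= -derive1E' // derive1E derive_val
  diff_gradient.
Qed.

Lemma is_derive_mx_coord {m n} {M : R -> 'M[R]_(m, n)} {t : R} {dM} i j :
  is_derive t 1 M dM -> is_derive t 1 (fun s => M s i j) (dM i j).
Proof.
move=> dMt; have dM' : derivable M t 1 by case: dMt.
apply: DeriveDef; first exact: ((derivable_mxP _ _ _).1 dM' i j).
have eM := derive_mx dM'; rewrite derive_val in eM.
by rewrite eM mxE.
Qed.

Lemma is_derive_dotv {u w : R -> V} {t : R} {du dw : V} :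
  is_derive t 1 u du -> is_derive t 1 w dw ->
  is_derive t 1 (fun s => dotv (u s) (w s)) (dotv (u t) dw + dotv du (w t)).
Proof.
move=> dut dwt.
have := is_derive_sum (fun i => is_deriveM
  (is_derive_mx_coord ord0 i dut) (is_derive_mx_coord ord0 i dwt)).
rewrite fct_sumE => dsum; apply: is_derive_eq.
by rewrite /dotv -big_split; apply: eq_bigr => i _ /=; congr (_ + _); exact: mulrC.
Qed.

(* Mirror-descent form of the Bregman derivative: the terms h(Z_t) and
   <grad h(Z_t), Z'_t> cancel. *)
Lemma is_derive_bregman {h : V -> R} {Z : R -> V} x {t : R} :
  differentiable h (Z t) -> derivable Z t 1 -> derivable (gradient h \o Z) t 1 ->
  is_derive t 1 (fun s => bregman h x (Z s))
    (- dotv (derive1 (gradient h \o Z) t) (x - Z t)).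
Proof.
move=> dh /derivableP dZ /derivableP dgZ.
rewrite -derive1E in dZ; rewrite -derive1E in dgZ.
have dxZ : is_derive t 1 (fun s => x - Z s) (0 - derive1 Z t) by exact: is_deriveB.
apply: (is_derive_eq (is_deriveB (is_deriveB (is_derive_cst (h x) t 1)
  (is_derive_comp_gradient dh dZ)) (is_derive_dotv dgZ dxZ))).
by rewrite !sub0r dotvNr [(gradient h \o Z) t]/=; ring.
Qed.

Lemma convex_fun_gradient_le {X : set V} {f : V -> R} {x y : V} :
  convex_fun_on X f -> X x -> X y -> differentiable f y ->
  dotv (gradient f y) (x - y) <= f x - f y.
Proof.
move=> cf Xx Xy df.
have /cvg_ex[/= L dL] : derivable f y (x - y) by exact: diff_derivable.
have DL : 'D_(x - y) f y = L by exact: cvg_lim.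
rewrite -diff_gradient -(deriveE _ df) DL.
apply: (cvgr_to_le (F := at_right (0 : R))
  (f := fun l : R => l^-1 *: ((f \o shift y) (l *: (x - y)) - f y))); last first.
  near=> l.
  have l0 : 0 < l by near: l; exact: nbhs_right_gt.
  have l1 : l <= 1 by near: l; exact: nbhs_right_le.
  rewrite /= /shift /=.
  have -> : l *: (x - y) + y = l *: x + (1 - l) *: y.
    by rewrite scalerBr scalerBl scale1r -addrA [- _ + y]addrC.
  change (l^-1 * (f (l *: x + (1 - l) *: y) - f y) <= f x - f y).
  rewrite ler_pdivrMl //; have := cf x y l Xx Xy (ltW l0) l1; lra.
move=> A /dL /nbhs_ballP [_ /posnumP[e] xe_A].
by exists e%:num => //= z xe_z /gt_eqF/negbT/xe_A; exact.
Unshelve. all: by end_near.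
Qed.

Lemma derive1_le0_nonincreasing (F : R -> R) s t :
  (forall u, derivable F u 1) -> (forall u, derive1 F u <= 0) -> s <= t -> F t <= F s.
Proof.
move=> dF dF0 st; apply: (@ler0_derive1_le_cc _ F s t) => //.
- by apply: derivable_within_continuous => u _; exact: dF.
- by rewrite in_itv /= lexx st.
- by rewrite in_itv /= lexx st.
Qed.

End Calculus.

Section Lyapunov.
Context {R : realType} {d : nat}.
Local Notation V := 'rV[R]_d.
Context {X : set V} {f h : V -> R} {alpha beta : R -> R} {Xc Z : R -> V}.
Hypothesis f_convex : convex_fun_on X f.
Hypothesis f_diff : forall t, differentiable f (Xc t).
Hypothesis h_diff : forall t, differentiable h (Z t).
Hypothesis Xc_in : forall t, X (Xc t).
Hypothesis Xc_der : forall t, derivable Xc t 1.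
Hypothesis Z_der : forall t, derivable Z t 1.
Hypothesis gradZ_der : forall t, derivable (gradient h \o Z) t 1.
Hypothesis beta_der : forall t, derivable beta t 1.
Hypothesis Z_def : forall t, Z t = Xc t + expR (- alpha t) *: derive1 Xc t.
Hypothesis mirror_flow : forall t,
  derive1 (gradient h \o Z) t = - (expR (alpha t + beta t) *: gradient f (Xc t)).

Local Notation D x := (fun t => bregman h x (Z t)).
Local Notation G x := (fun t => expR (beta t) * (f (Xc t) - f x)).

Lemma is_derive_bregman_flow (x : V) (t : R) :
  is_derive t 1 (D x) (expR (alpha t + beta t) * dotv (gradient f (Xc t)) (x - Z t)).
Proof.
have := is_derive_bregman x (h_diff t) (Z_der t) (gradZ_der t).
by rewrite mirror_flow dotvNl opprK dotvZl.
Qed.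

Lemma is_derive_scaled_gap (x : V) (t : R) :
  is_derive t 1 (G x) (expR (beta t) *
    (dotv (gradient f (Xc t)) (derive1 Xc t) + derive1 beta t * (f (Xc t) - f x))).
Proof.
have dexp : is_derive t 1 (expR \o beta) (expR (beta t) * derive1 beta t).
  by apply: is_derive1_comp; rewrite derive1E.
have dgap : is_derive t 1 (fun s => f (Xc s) - f x)
    (dotv (gradient f (Xc t)) (derive1 Xc t) - 0).
  have /derivableP dXc := Xc_der t; rewrite -derive1E in dXc.
  exact: is_deriveB (is_derive_comp_gradient (f_diff t) dXc) _.
apply: (is_derive_eq (is_deriveM dexp dgap)).
by rewrite [(expR \o beta) t]/= /GRing.scale /=; ring.
Qed.

Lemma derive1_lyapunov_le (x : V) (t : R) : X x ->
  derive1 (D x) t + derive1 (G x) t <=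
  expR (beta t) * ((derive1 beta t - expR (alpha t)) * (f (Xc t) - f x)).
Proof.
move=> Xx.
have dD := is_derive_bregman_flow x t; have dG := is_derive_scaled_gap x t.
rewrite [derive1 (D x) t]derive1E [derive1 (G x) t]derive1E !derive_val.
have -> : x - Z t = (x - Xc t) - expR (- alpha t) *: derive1 Xc t.
  by rewrite Z_def opprD addrA.
rewrite dotvBr dotvZr expRD expRN.
have convex_gap := convex_fun_gradient_le f_convex Xx (Xc_in t) (f_diff t).
have ea0 : 0 < expR (alpha t) := expR_gt0 _.
have eb0 : 0 < expR (beta t) := expR_gt0 _.
set g := dotv _ (derive1 Xc t); set c := dotv _ (x - Xc t) in convex_gap *.
have -> : expR (alpha t) * expR (beta t) * (c - (expR (alpha t))^-1 * g) +
    expR (beta t) * (g + derive1 beta t * (f (Xc t) - f x)) =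
  expR (beta t) * (expR (alpha t) * c + derive1 beta t * (f (Xc t) - f x)).
  by field; rewrite gt_eqF.
rewrite ler_pM2l //; have := ler_wpM2l (ltW ea0) convex_gap; lra.
Qed.

Lemma lyapunov_nonincreasing (x : V) : X x ->
  (forall t, (derive1 beta t - expR (alpha t)) * (f (Xc t) - f x) <= 0) ->
  (forall t, derivable (D x) t 1 /\ derivable (G x) t 1 /\
             derive1 (D x) t <= - derive1 (G x) t) /\
  (forall s t, s <= t -> D x t + G x t <= D x s + G x s).
Proof.
move=> Xx sign.
have dE_le0 t : derive1 (D x) t + derive1 (G x) t <= 0.
  apply: le_trans (derive1_lyapunov_le x t Xx) _.
  by rewrite pmulr_rle0 ?expR_gt0.
have dD t : derivable (D x) t 1 by case: (is_derive_bregman_flow x t).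
have dG t : derivable (G x) t 1 by case: (is_derive_scaled_gap x t).
split=> [t | s t st].
  by do 2!split=> //; have := dE_le0 t; lra.
apply: (derive1_le0_nonincreasing (fun t => D x t + G x t)) => // u.
  exact: derivableD.
by rewrite derive1E deriveD // -!derive1E.
Qed.

End Lyapunov.

Theorem proposition2 (R : realType) (d : nat) (X : set 'rV[R]_d)
  (f h : 'rV[R]_d -> R) (xstar : 'rV[R]_d) (alpha beta : R -> R)
  (Xc : R -> 'rV[R]_d) :
  closed X -> convex_on X ->
  convex_fun_on X f -> C1_on X f ->
  X xstar -> (forall y, X y -> f xstar <= f y) ->
  strictly_convex_fun_on X h -> C1_on X h ->
  smooth_fun alpha -> smooth_fun beta ->
  (forall s t, s <= t -> beta s <= beta t) ->
  (forall t, derive1 beta t <= expR (alpha t)) ->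
  (forall t, X (Xc t)) -> (forall t, derivable Xc t 1) ->
  let Z := fun t => Xc t + expR (- alpha t) *: derive1 Xc t in
  (forall t, X (Z t)) -> (forall t, derivable Z t 1) ->
  (forall t, derivable (gradient h \o Z) t 1) ->
  (forall t, derive1 (gradient h \o Z) t
             = - (expR (alpha t + beta t) *: gradient f (Xc t))) ->
  let D := fun x t => bregman h x (Z t) in
  let G := fun x t => expR (beta t) * (f (Xc t) - f x) in
  let E := fun x t => D x t + G x t in
  let conclusion := fun x =>
    (forall t, derivable (D x) t 1 /\ derivable (G x) t 1 /\
               derive1 (D x) t <= - derive1 (G x) t) /\
    (forall s t, s <= t -> E x t <= E x s) in
  conclusion xstar /\
  ((forall t, derive1 beta t = expR (alpha t)) ->
   forall x, X x -> conclusion x).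
Proof.
move=> _ _ f_convex [f_diff _] Xxstar xstar_min _ [h_diff _] _ beta_smooth _
  beta'_le Xc_in Xc_der Z Z_in Z_der gradZ_der mirror_flow D G E conclusion.
have beta_der t : derivable beta t 1 by exact: (beta_smooth 0%N t).
have lyap := lyapunov_nonincreasing f_convex (fun t => f_diff _ (Xc_in t))
  (fun t => h_diff _ (Z_in t)) Xc_in Xc_der Z_der gradZ_der beta_der
  (fun t => erefl) mirror_flow.
split=> [|beta'_eq x Xx]; apply: lyap => // t.
  by rewrite mulr_le0_ge0 ?subr_le0 ?subr_ge0 ?xstar_min.
by rewrite beta'_eq subrr mul0r.
Qed.
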